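(* Let $S\neq\mathcal{C}$ be a $\mathcal{C}$-semigroup. Then $S$ is $\mathcal{C}$-irreducible if and only if $\#\max_{\le_S}\mathrm{FG}(S)=1$.
   Context: An integer cone $\mathcal{C}\subseteq\mathbb{N}^p$ is the set of integer points of a finitely generated rational cone in $\mathbb{Q}_{\ge0}^p$. A $\mathcal{C}$-semigroup is a subset $S\subseteq\mathcal{C}$ containing $0$, closed under addition, with $\mathcal{C}\setminus S$ finite; $\mathcal{H}(S)=\mathcal{C}\setminus S$. A monomial order $\preceq$ on $\mathbb{N}^p$ is fixed (total order, compatible with addition, $\mathbf 0\preceq\mathbf c$ for all $\mathbf c$); $F(S)=\max_\preceq\mathcal{H}(S)$. $\mathrm{PF}(S)=\{\mathbf x\in\mathcal{H}(S)\mid\mathbf x+(S\setminus\{0\})\subseteq S\}$; $S$ is $\mathcal{C}$-irreducible if $\mathrm{PF}(S)=\{F(S)\}$ or $\mathrm{PF}(S)=\{F(S),F(S)/2\}$. $\mathbf x\le_S\mathbf y$ means $\mathbf y-\mathbf x\in S$; $\mathrm{FG}(S)=\{\mathbf x\in\mathcal{H}(S)\mid 2\mathbf x\in S,\ 3\mathbf x\in S\}$, and $\max_{\le_S}$ denotes the set of maximal elements with respect to $\le_S$. *)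

From mathcomp Require Import all_boot all_order all_algebra.
Set Implicit Arguments. Unset Strict Implicit. Unset Printing Implicit Defensive.
Import GRing.Theory Num.Theory.

Definition vec (p : nat) := {ffun 'I_p -> nat}.

Definition vzero (p : nat) : vec p := [ffun _ => 0%N].
Definition vadd (p : nat) (x y : vec p) : vec p := [ffun i => (x i + y i)%N].
Definition vmuln (p : nat) (n : nat) (x : vec p) : vec p := [ffun i => (n * x i)%N].

(* C is an integer cone: the integer points (in N^p) of a finitely generated
   rational cone { sum_j lambda_j g_j | lambda_j in Q_{>=0} } with g_j in Q_{>=0}^p. *)
Definition is_integer_cone (p : nat) (C : vec p -> Prop) : Prop :=
  exists gs : seq {ffun 'I_p -> rat},
    (forall g, g \in gs -> forall i, (0 <= g i)%R) /\
    (forall x : vec p, C x <->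
       exists lam : seq rat,
         [/\ size lam = size gs,
             (forall l, l \in lam -> (0 <= l)%R) &
             forall i, ((x i)%:R : rat) = (\sum_(j < size gs) lam`_j * (nth 0 gs j) i)%R]).

Definition is_monomial_order (p : nat) (le : vec p -> vec p -> Prop) : Prop :=
  (forall x, le x x) /\
  (forall x y, le x y -> le y x -> x = y) /\
  (forall x y z, le x y -> le y z -> le x z) /\
  (forall x y, le x y \/ le y x) /\
  (forall x y z, le x y -> le (vadd x z) (vadd y z)) /\
  (forall c, le (vzero p) c).

Definition is_Csemigroup (p : nat) (C S : vec p -> Prop) : Prop :=
  [/\ (forall x, S x -> C x),
      S (vzero p),
      (forall x y, S x -> S y -> S (vadd x y)) &
      exists l : seq (vec p), forall x, C x -> ~ S x -> x \in l].

Definition gaps (p : nat) (C S : vec p -> Prop) (x : vec p) : Prop := C x /\ ~ S x.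

Definition is_Frobenius (p : nat) (le : vec p -> vec p -> Prop) (C S : vec p -> Prop)
  (f : vec p) : Prop :=
  gaps C S f /\ forall h, gaps C S h -> le h f.

Definition PF (p : nat) (C S : vec p -> Prop) (x : vec p) : Prop :=
  gaps C S x /\ forall s, S s -> s <> vzero p -> S (vadd x s).

Definition C_irreducible (p : nat) (le : vec p -> vec p -> Prop) (C S : vec p -> Prop)
  : Prop :=
  exists f, is_Frobenius le C S f /\
    ((forall x, PF C S x <-> x = f) \/
     (exists h, f = vadd h h /\ forall x, PF C S x <-> (x = f \/ x = h))).

Definition leS (p : nat) (S : vec p -> Prop) (x y : vec p) : Prop :=
  exists s, S s /\ y = vadd x s.

Definition FG (p : nat) (C S : vec p -> Prop) (x : vec p) : Prop :=
  gaps C S x /\ S (vmuln 2 x) /\ S (vmuln 3 x).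

Definition maxFG (p : nat) (C S : vec p -> Prop) (x : vec p) : Prop :=
  FG C S x /\ forall y, FG C S y -> leS S x y -> y = x.

From mathcomp Require Import all_boot all_order all_algebra.
From mathcomp Require Import zify.
From Stdlib Require Import Classical.
Set Implicit Arguments. Unset Strict Implicit. Unset Printing Implicit Defensive.
Import GRing.Theory Num.Theory.

(* Finiteness is used only through one principle: a nonempty subset of a
   finite list has a maximum for any total preorder ([exists_max]).  Applied
   to the monomial order it yields the Frobenius element F of S (when S <> C);
   applied to the coordinate sum [vsum] it shows that every element of FG(S)
   lies <=_S-below a maximal one, and that the multiples k x of a gap x are
   eventually in S.

   (=>) If PF(S) = {F} or {F, F/2}: F is always maximal in FG(S), and any
   maximal element of FG(S) is pseudo-Frobenius, hence F (it cannot be F/2,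
   since twice it lies in S).
   (<=) If F is the only maximal element, every element of FG(S) is <=_S F.
   For a pseudo-Frobenius x <> F, let k be the largest index with k x a gap;
   then k x lies in FG(S), which forces F = k x, and a comparison of F with
   (k-1) x gives k = 2, i.e. x = F/2. *)

Section VectorArithmetic.
Variable p : nat.
Implicit Types x y z : vec p.

Lemma vaddC x y : vadd x y = vadd y x.
Proof. by apply/ffunP=> i; rewrite !ffunE addnC. Qed.

Lemma vaddA x y z : vadd x (vadd y z) = vadd (vadd x y) z.
Proof. by apply/ffunP=> i; rewrite !ffunE addnA. Qed.

Lemma vadd0l x : vadd (vzero p) x = x.
Proof. by apply/ffunP=> i; rewrite !ffunE. Qed.

Lemma vadd0r x : vadd x (vzero p) = x.
Proof. by apply/ffunP=> i; rewrite !ffunE addn0. Qed.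

Lemma vaddI x y z : vadd x y = vadd x z -> y = z.
Proof.
move=> e; apply/ffunP=> i; have := congr1 (fun g : vec p => g i) e.
rewrite /= !ffunE; lia.
Qed.

Lemma vaddK0 x y : vadd x y = x -> y = vzero p.
Proof. by move=> e; apply: (@vaddI x); rewrite vadd0r. Qed.

Lemma vadd_eq0r x y : vadd x y = vzero p -> y = vzero p.
Proof.
move=> e; apply/ffunP=> i; have := congr1 (fun g : vec p => g i) e.
rewrite /= !ffunE; lia.
Qed.

Lemma vdouble_inj x y : vadd x x = vadd y y -> x = y.
Proof.
move=> e; apply/ffunP=> i; have := congr1 (fun g : vec p => g i) e.
rewrite /= !ffunE; lia.
Qed.

Lemma vmuln0 x : vmuln 0 x = vzero p.
Proof. by apply/ffunP=> i; rewrite !ffunE. Qed.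

Lemma vmulnS n x : vmuln n.+1 x = vadd x (vmuln n x).
Proof. by apply/ffunP=> i; rewrite !ffunE mulSn. Qed.

Lemma vmuln1 x : vmuln 1 x = x.
Proof. by apply/ffunP=> i; rewrite !ffunE mul1n. Qed.

Lemma vmuln2 x : vmuln 2 x = vadd x x.
Proof. by apply/ffunP=> i; rewrite !ffunE mul2n addnn. Qed.

Lemma vmulnD m n x : vmuln (m + n) x = vadd (vmuln m x) (vmuln n x).
Proof. by apply/ffunP=> i; rewrite !ffunE mulnDl. Qed.

Lemma vmulnDr n x y : vmuln n (vadd x y) = vadd (vmuln n x) (vmuln n y).
Proof. by apply/ffunP=> i; rewrite !ffunE mulnDr. Qed.

Lemma vmulnA m n x : vmuln m (vmuln n x) = vmuln (m * n) x.
Proof. by apply/ffunP=> i; rewrite !ffunE mulnA. Qed.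

Lemma vmuln_eq0 n x : 0 < n -> vmuln n x = vzero p -> x = vzero p.
Proof.
move=> n_gt0 e; apply/ffunP=> i; have := congr1 (fun g : vec p => g i) e.
rewrite /= !ffunE; nia.
Qed.

Definition vsum x := (\sum_(i < p) x i)%N.

Lemma vsumD x y : vsum (vadd x y) = vsum x + vsum y.
Proof. by rewrite /vsum -big_split /=; apply: eq_bigr => i _; rewrite ffunE. Qed.

Lemma vsum_gt0 x : x <> vzero p -> 0 < vsum x.
Proof.
move=> x_nz; rewrite lt0n; apply/negP => /eqP sum0; apply: x_nz.
apply/ffunP => i; rewrite ffunE; move: sum0; rewrite /vsum (bigD1 i) //=; lia.
Qed.

End VectorArithmetic.

Lemma exists_max (T : eqType) (r : T -> T -> Prop) (l : seq T) (P : T -> Prop) :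
  (forall x, r x x) -> (forall x y z, r x y -> r y z -> r x z) ->
  (forall x y, r x y \/ r y x) ->
  (forall g, P g -> g \in l) -> (exists g, P g) ->
  exists m, P m /\ forall h, P h -> r h m.
Proof.
move=> r_refl r_trans r_total.
elim: l P => [|a l IH] P P_l [g Pg]; first by have := P_l g Pg.
case: (classic (exists h, P h /\ h <> a)) => [P'_ne|P'_empty].
- have [m [[Pm _] m_max]] : exists m, (P m /\ m <> a) /\
      forall h, P h /\ h <> a -> r h m.
    apply: IH P'_ne => h [Ph h_neq_a].
    by move: (P_l h Ph); rewrite in_cons => /orP[/eqP|].
  case: (classic (P a /\ r m a)) => [[Pa r_ma]|not_a].
  + exists a; split=> // h Ph; case: (classic (h = a)) => [->|h_neq_a] //.
    exact: r_trans (m_max h (conj Ph h_neq_a)) r_ma.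
  + exists m; split=> // h Ph; case: (classic (h = a)) => [eha|h_neq_a].
    * rewrite eha; case: (r_total a m) => // r_ma; case: not_a.
      by split=> //; rewrite -eha.
    * exact: m_max.
- have only_a : forall h, P h -> h = a.
    by move=> h Ph; apply: NNPP => h_neq_a; apply: P'_empty; exists h.
  by exists a; split; [rewrite -(only_a g Pg)| move=> h /only_a ->].
Qed.

Lemma cone_add p (C : vec p -> Prop) : is_integer_cone C ->
  forall x y, C x -> C y -> C (vadd x y).
Proof.
case=> gs [_ C_iff] x y /C_iff [l1 [size1 pos1 e1]] /C_iff [l2 [size2 pos2 e2]].
have coef_ge0 (lam : seq rat) j :
    (forall a, a \in lam -> (0 <= a)%R) -> (0 <= lam`_j)%R.
  move=> pos; case: (ltnP j (size lam)) => hj; first exact/pos/mem_nth.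
  by rewrite nth_default.
apply/C_iff; exists (mkseq (fun j => l1`_j + l2`_j)%R (size gs)); split.
- by rewrite size_mkseq.
- by move=> a /mapP [j _ ->]; apply: addr_ge0; apply: coef_ge0.
- move=> i; rewrite ffunE natrD e1 e2 -big_split /=.
  by apply: eq_bigr => j _; rewrite nth_mkseq // mulrDl.
Qed.

Lemma leS_refl p (S : vec p -> Prop) x : S (vzero p) -> leS S x x.
Proof. by move=> S0; exists (vzero p); rewrite vadd0r. Qed.

Lemma leS_trans p (S : vec p -> Prop) x y z :
  (forall a b, S a -> S b -> S (vadd a b)) -> leS S x y -> leS S y z -> leS S x z.
Proof.
move=> Sadd [s [Ss ->]] [t [St ->]].
by exists (vadd s t); split; [apply: Sadd | rewrite vaddA].
Qed.

Section CSemigroup.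
Variables (p : nat) (C S : vec p -> Prop).
Hypothesis hC : is_integer_cone C.
Hypothesis hS : is_Csemigroup C S.
Implicit Types x y z s t : vec p.

Lemma S_sub_C x : S x -> C x. Proof. by case: hS => h _ _ _; apply: h. Qed.
Lemma S0 : S (vzero p). Proof. by case: hS. Qed.
Lemma Sadd x y : S x -> S y -> S (vadd x y). Proof. by case: hS => _ _ h _; apply: h. Qed.
Lemma Cadd x y : C x -> C y -> C (vadd x y). Proof. exact: cone_add. Qed.

Lemma gaps_finite : exists l : seq (vec p), forall g, gaps C S g -> g \in l.
Proof. by case: hS => _ _ _ [l hl]; exists l => g [Cg nSg]; apply: hl. Qed.

Lemma Smul n x : S x -> S (vmuln n x).
Proof.
move=> Sx; elim: n => [|n IH]; first by rewrite vmuln0; apply: S0.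
by rewrite vmulnS; apply: Sadd.
Qed.

Lemma Cmul n x : C x -> C (vmuln n x).
Proof.
move=> Cx; elim: n => [|n IH]; first by rewrite vmuln0; apply/S_sub_C/S0.
by rewrite vmulnS; apply: Cadd.
Qed.

Lemma gap_nz x : gaps C S x -> x <> vzero p.
Proof. by move=> [_ nSx] ex; apply: nSx; rewrite ex; apply: S0. Qed.

(* Every element of FG(S) lies below a maximal one: among the elements of
   FG(S) above y, one of largest coordinate sum is maximal. *)
Lemma FG_below_maxFG y : FG C S y -> exists m, maxFG C S m /\ leS S y m.
Proof.
move=> FGy; have [l gaps_l] := gaps_finite.
have [m [[FGm y_m] m_max]] :
    exists m, (FG C S m /\ leS S y m) /\
      forall h, FG C S h /\ leS S y h -> vsum h <= vsum m.
  apply: (exists_max (r := fun a b => vsum a <= vsum b) (l := l)).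
  - by move=> a.
  - by move=> a b c; apply: leq_trans.
  - by move=> a b; apply/orP/leq_total.
  - by move=> h [[gh _] _]; apply: gaps_l.
  - by exists y; split=> //; apply/leS_refl/S0.
exists m; split=> //; split=> // w FGw [s [Ss ew]].
have /m_max : FG C S w /\ leS S y w.
  by split=> //; apply: leS_trans Sadd y_m _; exists s.
rewrite ew vsumD => sum_le.
have -> : s = vzero p.
  by apply: NNPP => s_nz; have := vsum_gt0 s_nz; lia.
by rewrite vadd0r.
Qed.

Lemma last_gap_multiple x : gaps C S x ->
  exists k, [/\ 0 < k, ~ S (vmuln k x) & forall m, k < m -> S (vmuln m x)].
Proof.
move=> [Cx nSx]; have [l gaps_l] := gaps_finite.
have x_nz := gap_nz (conj Cx nSx).
have [y [[k [k_gt0 -> nSk]] k_max]] :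
    exists y, (exists k, [/\ 0 < k, y = vmuln k x & ~ S y]) /\
      forall h, (exists k, [/\ 0 < k, h = vmuln k x & ~ S h]) ->
        vsum h <= vsum y.
  apply: (exists_max (r := fun a b => vsum a <= vsum b) (l := l)).
  - by move=> a.
  - by move=> a b c; apply: leq_trans.
  - by move=> a b; apply/orP/leq_total.
  - by move=> h [k [_ -> nSh]]; apply: gaps_l; split=> //; apply: Cmul.
  - by exists x, 1; rewrite vmuln1.
exists k; split=> // m k_lt_m; apply: NNPP => nSm.
have m_gt0 : 0 < m by lia.
have := k_max (vmuln m x) (ex_intro _ m (And3 m_gt0 erefl nSm)).
have d_gt0 : 0 < m - k by rewrite subn_gt0.
have d_nz : vmuln (m - k) x <> vzero p by move/(vmuln_eq0 d_gt0).
rewrite -(subnK (ltnW k_lt_m)) vmulnD vsumD; have := vsum_gt0 d_nz; lia.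
Qed.

Lemma PF_mul x n s : PF C S x -> S s -> s <> vzero p -> S (vadd (vmuln n x) s).
Proof.
move=> [_ x_PF] Ss s_nz; elim: n => [|n IH]; first by rewrite vmuln0 vadd0l.
by rewrite vmulnS -vaddA; apply: x_PF => // /vadd_eq0r.
Qed.

Lemma PF_up x n d : PF C S x -> 0 < n -> S (vmuln n x) -> S (vmuln (d + n) x).
Proof.
move=> PFx n_gt0 Sn; rewrite vmulnD; apply: PF_mul => //.
by move/(vmuln_eq0 n_gt0); apply: gap_nz; case: PFx.
Qed.

Lemma PF_multiple_FG x k j : PF C S x ->
  ~ S (vmuln k x) -> (forall m, k < m -> S (vmuln m x)) ->
  0 < j -> j <= k -> k < 2 * j -> FG C S (vmuln j x).
Proof.
move=> PFx nSk S_above j_gt0 j_le_k k_lt_2j.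
have [[Cx _] _] := PFx.
split; first split.
- exact: Cmul.
- by move=> Sj; apply: nSk; rewrite -(subnK j_le_k); apply: PF_up.
- by rewrite !vmulnA; split; apply: S_above; lia.
Qed.

(* A maximal element of FG(S) is pseudo-Frobenius: if x + s were a gap for
   some nonzero s in S, it would be a larger element of FG(S). *)
Lemma maxFG_PF x : maxFG C S x -> PF C S x.
Proof.
move=> [[[Cx nSx] [S2 S3]] x_max]; split=> // s Ss s_nz.
apply: NNPP => nSxs.
have FGxs : FG C S (vadd x s).
  split; first by split=> //; apply/Cadd/S_sub_C.
  by rewrite !vmulnDr; split; apply: Sadd => //; apply: Smul.
by apply: s_nz; apply: (@vaddK0 _ x); apply: x_max FGxs _; exists s.
Qed.

Section Frobenius.
Variable le : vec p -> vec p -> Prop.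
Hypothesis hle : is_monomial_order le.

Lemma frobenius_exists : ~ (forall x, S x <-> C x) -> exists f, is_Frobenius le C S f.
Proof.
move=> S_neq_C; have [l gaps_l] := gaps_finite.
have [le_refl [_ [le_trans [le_total _]]]] := hle.
apply: (exists_max le_refl le_trans le_total gaps_l).
apply: NNPP => no_gap; apply: S_neq_C => x; split; first exact: S_sub_C.
by move=> Cx; apply: NNPP => nSx; apply: no_gap; exists x.
Qed.

Variable f : vec p.
Hypothesis Ff : is_Frobenius le C S f.

Lemma above_frobenius t : C (vadd f t) -> t <> vzero p -> S (vadd f t).
Proof.
have [_ [le_anti [_ [_ [le_add le0]]]]] := hle.
move=> Cft t_nz; apply: NNPP => nSft; apply: t_nz; apply: (@vaddK0 _ f).
apply: le_anti; first exact: (proj2 Ff).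
by have := le_add _ _ f (le0 t); rewrite vadd0l vaddC.
Qed.

Lemma frobenius_PF : PF C S f.
Proof.
have [[Cf nSf] _] := Ff; split=> // s Ss s_nz.
by apply: above_frobenius s_nz; apply/Cadd/S_sub_C.
Qed.

Lemma frobenius_maxFG : maxFG C S f.
Proof.
have [[Cf nSf] _] := Ff; have f_nz := gap_nz (conj Cf nSf).
split; first (split; first exact: (proj1 Ff); split).
- by rewrite vmuln2; apply: above_frobenius => //; apply: Cadd.
- rewrite vmulnS; apply: above_frobenius; first by apply/Cadd/Cmul.
  by move/(vmuln_eq0 (isT : 0 < 2)).
- move=> y [[Cy nSy] _] [s [Ss ey]]; rewrite ey in Cy nSy *.
  case: (classic (s = vzero p)) => [->|s_nz]; first by rewrite vadd0r.
  by case: nSy; apply: above_frobenius.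
Qed.

Lemma PF_half_frobenius x : (forall y, FG C S y -> leS S y f) ->
  PF C S x -> x <> f -> vadd x x = f.
Proof.
move=> below_f PFx x_neq_f; have [[Cx nSx] _] := PFx.
have [k [k_gt0 nSk S_above]] := last_gap_multiple (conj Cx nSx).
have FG_mul := PF_multiple_FG PFx nSk S_above.
have f_eq : f = vmuln k x.
  have [s [Ss ef]] := below_f _ (FG_mul k k_gt0 (leqnn k) ltac:(lia)).
  case: (classic (s = vzero p)) => [s0|s_nz]; first by rewrite ef s0 vadd0r.
  by case: (proj1 Ff) => _ []; rewrite ef; apply: PF_mul.
case: (ltngtP k 2) => [k_lt2|k_gt2|k2]; last by rewrite f_eq k2 vmuln2.
- by case: x_neq_f; rewrite f_eq (_ : k = 1) ?vmuln1 //; lia.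
- have [t [St ef']] := below_f _ (FG_mul k.-1 ltac:(lia) ltac:(lia) ltac:(lia)).
  have ek : vmuln k x = vadd (vmuln k.-1 x) x.
    by rewrite -{1}(prednK k_gt0) vmulnS vaddC.
  by case: nSx; move: ef'; rewrite f_eq ek => /vaddI ->.
Qed.

End Frobenius.

Lemma irreducible_unique_maxFG le : is_monomial_order le ->
  C_irreducible le C S -> exists! x, maxFG C S x.
Proof.
move=> hle [f [Ff PF_f]]; exists f; split; first exact: (frobenius_maxFG hle Ff).
move=> x max_x; have PFx := maxFG_PF max_x.
case: PF_f => [PF_eq|[h [ef PF_eq]]]; first by apply/esym/PF_eq.
case: (proj1 (PF_eq x) PFx) => [//|ex].
have [[_ [S2x _]] _] := max_x.
by case: (proj1 Ff) => _; rewrite ef -ex -vmuln2.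
Qed.

Lemma unique_maxFG_irreducible le f : is_monomial_order le ->
  is_Frobenius le C S f -> (exists! x, maxFG C S x) -> C_irreducible le C S.
Proof.
move=> hle Ff [m [_ m_unique]].
have m_f : m = f := m_unique f (frobenius_maxFG hle Ff).
have below_f y : FG C S y -> leS S y f.
  by move=> /FG_below_maxFG [m' [max_m' y_m']]; rewrite -m_f (m_unique m' max_m').
have half := PF_half_frobenius Ff below_f.
exists f; split=> //.
case: (classic (exists x, PF C S x /\ x <> f)) => [[x [PFx x_neq_f]]|only_f].
- right; exists x; split; first by rewrite half.
  move=> z; split=> [PFz|[->|->] //]; last exact: (frobenius_PF hle Ff).
  case: (classic (z = f)) => [|z_neq_f]; [by left | right].
  by apply: vdouble_inj; rewrite !half.
- left=> x; split=> [PFx|->]; last exact: (frobenius_PF hle Ff).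
  by apply: NNPP => x_neq_f; apply: only_f; exists x.
Qed.

End CSemigroup.

Theorem mainTheorem17 (p : nat) (C S : vec p -> Prop) (le : vec p -> vec p -> Prop) :
  is_integer_cone C -> is_monomial_order le -> is_Csemigroup C S ->
  ~ (forall x, S x <-> C x) ->
  (C_irreducible le C S <-> exists! x, maxFG C S x).
Proof.
move=> hC hle hS S_neq_C; split; first exact: irreducible_unique_maxFG.
have [f Ff] := frobenius_exists hS hle S_neq_C.
exact: unique_maxFG_irreducible Ff.
Qed.
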